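(* Let $a,b,c\in S^0$ be real-valued on $[0,T]\times\mathbb R^n\times\mathbb R^n$ with $b\ge\delta_1t$, $|ac|\le\bar\epsilon b^2$, $|c|\le\bar\epsilon b^{3/2}$ ($\bar\epsilon$ a sufficiently small absolute constant) and $\partial_tc=\mathcal O(b)$. Then there is $\epsilon>0$ such that the matrix $S-\epsilon t\,\partial_tS$ is positive semidefinite at every point of $[0,T]\times\mathbb R^n\times\mathbb R^n$.
   Context: $S^0=S^0_{1,0}(\mathbb R^n\times\mathbb R^n)$, symbols depending smoothly on $t\in[0,T]$ with seminorms of the symbols and of their $t$-derivatives bounded uniformly; $f=\mathcal O(g)$ means $|f|\le Cg$ on $[0,T]\times\mathbb R^{2n}$. $S=\frac13\begin{pmatrix}3&2a&-b\\ 2a&2(a^2+b)&-ab-3c\\ -b&-ab-3c&b^2-2ac\end{pmatrix}$. *)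

From Stdlib Require Import Reals.
From mathcomp Require Import ssreflect ssrbool eqtype ssrnat seq fintype bigop.
Open Scope R_scope.

Definition deriv_on (T : R) (g : R -> R) (t l : R) : Prop :=
  forall eps, 0 < eps -> exists delta, 0 < delta /\
    forall h, h <> 0 -> Rabs h < delta -> 0 <= t + h <= T ->
      Rabs ((g (t + h) - g t) / h - l) < eps.

(* functions of (t, x, xi) in [0,T] x R^n x R^n, R^n = 'I_n -> R *)
Definition sym_fun (n : nat) := R -> ('I_n -> R) -> ('I_n -> R) -> R.

Definition upd {n : nat} (x : 'I_n -> R) (i : 'I_n) (s : R) : 'I_n -> R :=
  fun j => if j == i then x j + s else x j.

Definition eucl_norm {n : nat} (xi : 'I_n -> R) : R :=
  sqrt (\big[Rplus/0]_(i < n) (xi i ^ 2)).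

Inductive dir (n : nat) : Type :=
| Dt : dir n
| Dx : 'I_n -> dir n
| Dxi : 'I_n -> dir n.
Arguments Dt {n}.
Arguments Dx {n} _.
Arguments Dxi {n} _.

Definition is_xi_dir {n : nat} (d : dir n) : bool :=
  match d with Dxi _ => true | _ => false end.

Definition is_partial (T : R) {n : nat} (d : dir n) (f g : sym_fun n) : Prop :=
  forall t x xi, 0 <= t <= T ->
  match d with
  | Dt => deriv_on T (fun s => f s x xi) t (g t x xi)
  | Dx i => derivable_pt_lim (fun s => f t (upd x i s) xi) 0 (g t x xi)
  | Dxi i => derivable_pt_lim (fun s => f t x (upd xi i s)) 0 (g t x xi)
  end.

(* f is a symbol in S^0_{1,0}, depending smoothly on t in [0,T], with all
   seminorms (including t-derivatives) uniformly bounded: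
   F l is the iterated partial derivative of f along the list of directions l,
   and |d_t^k d_x^alpha d_xi^beta f| <= C (1+|xi|)^{-|beta|}. *)
Definition in_S0 (T : R) {n : nat} (f : sym_fun n) : Prop :=
  exists F : seq (dir n) -> sym_fun n,
    (forall t x xi, 0 <= t <= T -> F nil t x xi = f t x xi) /\
    (forall d l, is_partial T d (F l) (F (d :: l))) /\
    (forall l, exists C, forall t x xi, 0 <= t <= T ->
       Rabs (F l t x xi) <= C / (1 + eucl_norm xi) ^ (count is_xi_dir l)).

Definition Sent (i j : nat) (a b c : R) : R :=
  match i, j with
  | O, O => 1
  | O, 1%nat | 1%nat, O => 2 * a / 3
  | O, 2%nat | 2%nat, O => - b / 3
  | 1%nat, 1%nat => 2 * (a ^ 2 + b) / 3
  | 1%nat, 2%nat | 2%nat, 1%nat => (- (a * b) - 3 * c) / 3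
  | 2%nat, 2%nat => (b ^ 2 - 2 * a * c) / 3
  | _, _ => 0
  end.

Definition psd3 (m : nat -> nat -> R) : Prop :=
  forall v : nat -> R,
    0 <= sum_f_R0 (fun i => sum_f_R0 (fun j => v i * m i j * v j) 2) 2.

(* Completing the square in v0,
     v^T S v = w^2 + (2/9) q(v1, v2),   w = v0 + (2 a v1 - b v2) / 3,
   and the smallness of ac and c makes q coercive in X = a v1, Y = sqrt b v1, Z = b v2.
   Differentiating the identity in t gives t v^T (d_t S) v = 2 w (t d_t w) + (2/9) t d_t q.
   Since t <= b / delta1 and d_t c = O(b), both t d_t w and t d_t q are controlled by
   X, Y, Z with constants coming from the S^0 bounds; the cross term is absorbed by w^2,
   and a small eps keeps the perturbed form nonnegative. *)

From Stdlib Require Import Reals Lra Psatz.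
From mathcomp Require Import ssreflect ssrbool ssrnat seq.
Open Scope R_scope.

Lemma Rabs_mult_le (x y X Y : R) :
  Rabs x <= X -> Rabs y <= Y -> Rabs (x * y) <= X * Y.
Proof.
move=> Hx Hy; rewrite Rabs_mult.
by apply: Rmult_le_compat => //; apply: Rabs_pos.
Qed.

Lemma Rabs_plus_le (x y X Y : R) :
  Rabs x <= X -> Rabs y <= Y -> Rabs (x + y) <= X + Y.
Proof. by move=> Hx Hy; have := Rabs_triang x y; lra. Qed.

Lemma mul_le_half_sum_sqr (k K x y : R) :
  Rabs k <= K -> k * x * y <= K * (x ^ 2 + y ^ 2) / 2.
Proof.
move=> Hk; have := Rle_abs (k * x * y); rewrite Rmult_assoc Rabs_mult.
have amgm : Rabs (x * y) <= (x ^ 2 + y ^ 2) / 2.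
  rewrite Rabs_mult -(pow2_abs x) -(pow2_abs y).
  by have := pow2_ge_0 (Rabs x - Rabs y); lra.
by have := Rmult_le_compat _ _ _ _ (Rabs_pos k) (Rabs_pos (x * y)) Hk amgm; lra.
Qed.

Lemma form3_le (k11 k12 k13 k22 k23 k33 K X Y Z : R) :
  Rabs k11 <= K -> Rabs k12 <= K -> Rabs k13 <= K ->
  Rabs k22 <= K -> Rabs k23 <= K -> Rabs k33 <= K ->
  k11 * X ^ 2 + k12 * X * Y + k13 * X * Z + k22 * Y ^ 2 + k23 * Y * Z + k33 * Z ^ 2
  <= 2 * K * (X ^ 2 + Y ^ 2 + Z ^ 2).
Proof.
move=> /(mul_le_half_sum_sqr _ _ X X) H11 /(mul_le_half_sum_sqr _ _ X Y) H12.
move=> /(mul_le_half_sum_sqr _ _ X Z) H13 /(mul_le_half_sum_sqr _ _ Y Y) H22.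
move=> /(mul_le_half_sum_sqr _ _ Y Z) H23 /(mul_le_half_sum_sqr _ _ Z Z) H33.
nra.
Qed.

Lemma lin2_sqr_le (k1 k2 K Y Z : R) :
  Rabs k1 <= K -> Rabs k2 <= K -> (k1 * Y + k2 * Z) ^ 2 <= 2 * K ^ 2 * (Y ^ 2 + Z ^ 2).
Proof.
have sqr_le k : Rabs k <= K -> k ^ 2 <= K ^ 2.
  by move=> Hk; rewrite -pow2_abs; have := Rabs_pos k; nra.
move=> /sqr_le H1 /sqr_le H2.
have := Rmult_le_compat_r _ _ _ (pow2_ge_0 Y) H1.
have := Rmult_le_compat_r _ _ _ (pow2_ge_0 Z) H2.
by have := pow2_ge_0 (k1 * Y - k2 * Z); nra.
Qed.

(* When [y = 0] the bound forces [x = 0], so [q = 0] works. *)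
Lemma exists_ratio (x y K : R) :
  0 <= y -> 0 <= K -> Rabs x <= K * y -> exists q, x = q * y /\ Rabs q <= K.
Proof.
move=> y_ge0 K_ge0 Hx; case: (Req_dec y 0) => [y0 | y_neq0].
- exists 0; rewrite Rabs_R0; split=> //.
  move: Hx; rewrite y0 Rmult_0_r Rmult_0_l => Hx.
  by have := Rle_abs x; have := Rle_abs (- x); rewrite Rabs_Ropp; lra.
- have Ex : x = x / y * y by field.
  exists (x / y); split=> //.
  move: Hx; rewrite {1}Ex Rabs_mult (Rabs_pos_eq y) // => Hx.
  by apply: (Rmult_le_reg_r y); lra.
Qed.

Lemma sqrt_le_1_plus (x : R) : 0 <= x -> sqrt x <= 1 + x.
Proof. by move=> x_ge0; have := sqrt_sqrt x x_ge0; have := sqrt_pos x; nra. Qed.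

Lemma limit1_in_ext (f g : R -> R) (D : R -> Prop) (l x0 : R) :
  (forall x, D x -> f x = g x) -> limit1_in f D l x0 -> limit1_in g D l x0.
Proof.
move=> Efg H eps /H [d [d_gt0 Hd]]; exists d; split=> // x [Dx dx].
by rewrite -Efg //; apply: Hd.
Qed.

Section DerivOn.

Variable T : R.

Definition deriv_dom (t h : R) : Prop := h <> 0 /\ 0 <= t + h <= T.

Lemma deriv_on_limit1_in (g : R -> R) (t l : R) :
  deriv_on T g t l <->
  limit1_in (fun h => (g (t + h) - g t) / h) (deriv_dom t) l 0.
Proof.
rewrite /deriv_on /limit1_in /limit_in /= /Rdist /deriv_dom.
split=> H eps /H [d [d_gt0 Hd]]; exists d; split=> //.
- by move=> h [[h0 ht]]; rewrite Rminus_0_r => /Hd; apply.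
- by move=> h h0 hd ht; apply: Hd; rewrite Rminus_0_r.
Qed.

Lemma deriv_on_ext (f g : R -> R) (t l : R) : 0 <= t <= T ->
  (forall s, 0 <= s <= T -> f s = g s) -> deriv_on T f t l -> deriv_on T g t l.
Proof.
move=> Ht Efg; rewrite !deriv_on_limit1_in; apply: limit1_in_ext => h [_ Hth].
by rewrite !Efg.
Qed.

Lemma deriv_on_const (k t : R) : deriv_on T (fun _ => k) t 0.
Proof.
rewrite deriv_on_limit1_in; apply: (limit1_in_ext (fun _ => 0)).
  by move=> h [h0 _]; rewrite Rminus_diag /Rdiv Rmult_0_l.
exact: (limit_free (fun _ => 0) _ 0 0).
Qed.

Lemma deriv_on_plus (f g : R -> R) (t l1 l2 : R) :
  deriv_on T f t l1 -> deriv_on T g t l2 ->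
  deriv_on T (fun s => f s + g s) t (l1 + l2).
Proof.
rewrite !deriv_on_limit1_in => Hf /(limit_plus _ _ _ _ _ _ Hf).
by apply: limit1_in_ext => h [h0 _]; field.
Qed.

Lemma deriv_on_opp (f : R -> R) (t l : R) :
  deriv_on T f t l -> deriv_on T (fun s => - f s) t (- l).
Proof.
rewrite !deriv_on_limit1_in => /limit_Ropp.
by apply: limit1_in_ext => h [h0 _]; field.
Qed.

(* The difference quotient of [f g] is [Df h * (g t + h * Dg h) + f t * Dg h]. *)
Lemma deriv_on_mult (f g : R -> R) (t l1 l2 : R) :
  deriv_on T f t l1 -> deriv_on T g t l2 ->
  deriv_on T (fun s => f s * g s) t (l1 * g t + f t * l2).
Proof.
rewrite !deriv_on_limit1_in => Hf Hg.
set Dg := fun h => (g (t + h) - g t) / h.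
have Hgt : limit1_in (fun h => g t + h * Dg h) (deriv_dom t) (g t + 0 * l2) 0.
  exact: limit_plus (limit_free (fun _ => g t) _ 0 0) (limit_mul _ _ _ _ _ _ (lim_x _ 0) Hg).
have := limit_plus _ _ _ _ _ _ (limit_mul _ _ _ _ _ _ Hf Hgt)
  (limit_mul _ _ _ _ _ _ (limit_free (fun _ => f t) _ 0 0) Hg).
rewrite Rmult_0_l Rplus_0_r.
by apply: limit1_in_ext => h [h0 _]; rewrite /Dg; field.
Qed.

Lemma deriv_on_sqr (f : R -> R) (t l : R) :
  deriv_on T f t l -> deriv_on T (fun s => f s ^ 2) t (2 * f t * l).
Proof.
move=> Hf; have := deriv_on_mult _ _ _ _ _ Hf Hf; rewrite !deriv_on_limit1_in.
rewrite (_ : l * f t + f t * l = 2 * f t * l); last by ring.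
by apply: limit1_in_ext => h _; rewrite /Rdiv; ring.
Qed.

Lemma deriv_on_unique (g : R -> R) (t l1 l2 : R) : 0 < T -> 0 <= t <= T ->
  deriv_on T g t l1 -> deriv_on T g t l2 -> l1 = l2.
Proof.
move=> T_gt0 Ht; rewrite !deriv_on_limit1_in; apply: single_limit => alp alp_gt0.
have m_gt0 : 0 < Rmin (alp / 2) (T / 2) by apply: Rmin_pos; lra.
have := Rmin_l (alp / 2) (T / 2); have := Rmin_r (alp / 2) (T / 2).
rewrite /deriv_dom /Rdist.
case: (Rle_lt_dec t (T / 2)) => Ht2 m_le1 m_le2.
- exists (Rmin (alp / 2) (T / 2)).
  by rewrite Rminus_0_r Rabs_pos_eq; lra.
- exists (- Rmin (alp / 2) (T / 2)).
  by rewrite Rminus_0_r Rabs_Ropp Rabs_pos_eq; lra.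
Qed.

End DerivOn.

Ltac deriv_on_rules := first
  [ apply: deriv_on_plus | apply: deriv_on_opp | apply: deriv_on_sqr
  | apply: deriv_on_mult | apply: deriv_on_const ].

Definition quad_form3 (m : nat -> nat -> R) (v : nat -> R) : R :=
  sum_f_R0 (fun i => sum_f_R0 (fun j => v i * m i j * v j) 2) 2.

Lemma quad_form3_sub (m m' : nat -> nat -> R) (k : R) (v : nat -> R) :
  quad_form3 (fun i j => m i j - k * m' i j) v = quad_form3 m v - k * quad_form3 m' v.
Proof. by rewrite /quad_form3 /=; ring. Qed.

Lemma deriv_on_quad_form3 (T : R) (m : R -> nat -> nat -> R) (dm : nat -> nat -> R)
    (t : R) (v : nat -> R) :
  (forall i j, (i < 3)%nat -> (j < 3)%nat -> deriv_on T (fun s => m s i j) t (dm i j)) ->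
  deriv_on T (fun s => quad_form3 (m s) v) t (quad_form3 dm v).
Proof.
move=> Hm; rewrite /quad_form3 /=.
eapply (eq_ind _ (deriv_on _ _ _)).
  by repeat (exact: Hm || deriv_on_rules).
by cbv beta; ring.
Qed.

Definition S_square (a b v0 v1 v2 : R) : R := v0 + (2 * a * v1 - b * v2) / 3.

Definition S_rest (a b c v1 v2 : R) : R :=
  (a ^ 2 + 3 * b) * v1 ^ 2 - (a * b + 9 * c) * v1 * v2 + (b ^ 2 - 3 * (a * c)) * v2 ^ 2.

Definition S_square_dt (da db v1 v2 : R) : R := (2 * da * v1 - db * v2) / 3.

Definition S_rest_dt (a b c da db dc v1 v2 : R) : R :=
  (2 * a * da + 3 * db) * v1 ^ 2 - (da * b + a * db + 9 * dc) * v1 * v2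
  + (2 * b * db - 3 * (da * c + a * dc)) * v2 ^ 2.

Lemma quad_form3_S (a b c : R) (v : nat -> R) :
  quad_form3 (fun i j => Sent i j a b c) v =
  S_square a b (v 0%nat) (v 1%nat) (v 2%nat) ^ 2 + 2 / 9 * S_rest a b c (v 1%nat) (v 2%nat).
Proof. by rewrite /quad_form3 /= /S_square /S_rest; field. Qed.

Lemma quad_form3_S_dt (T : R) (fa fb fc : R -> R) (t da db dc : R)
    (D : nat -> nat -> R) (v : nat -> R) :
  0 < T -> 0 <= t <= T ->
  deriv_on T fa t da -> deriv_on T fb t db -> deriv_on T fc t dc ->
  (forall i j, (i < 3)%nat -> (j < 3)%nat ->
     deriv_on T (fun s => Sent i j (fa s) (fb s) (fc s)) t (D i j)) ->
  quad_form3 D v =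
  2 * S_square (fa t) (fb t) (v 0%nat) (v 1%nat) (v 2%nat) * S_square_dt da db (v 1%nat) (v 2%nat)
  + 2 / 9 * S_rest_dt (fa t) (fb t) (fc t) da db dc (v 1%nat) (v 2%nat).
Proof.
move=> T_gt0 Ht Ha Hb Hc HD.
apply: (deriv_on_unique T (fun s => quad_form3 (fun i j => Sent i j (fa s) (fb s) (fc s)) v) t)
  => //; first exact: (deriv_on_quad_form3 T (fun s i j => Sent i j (fa s) (fb s) (fc s))).
apply: (deriv_on_ext T (fun s => S_square (fa s) (fb s) (v 0%nat) (v 1%nat) (v 2%nat) ^ 2
  + 2 / 9 * S_rest (fa s) (fb s) (fc s) (v 1%nat) (v 2%nat))) => [//|s _|].
  by rewrite quad_form3_S.
rewrite /S_square /S_rest /Rdiv /Rminus.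
eapply (eq_ind _ (deriv_on _ _ _)).
  by repeat (exact: Ha || exact: Hb || exact: Hc || deriv_on_rules).
by cbv beta; rewrite /S_square_dt /S_rest_dt /Rdiv; ring.
Qed.

Section Perturbation.

Variables a b c da db dc t r s gc gac gdc M eps v1 v2 : R.
Hypotheses (M_ge1 : 1 <= M) (r_ge0 : 0 <= r) (r_le : r <= M) (s_le : Rabs s <= M)
  (a_le : Rabs a <= M) (da_le : Rabs da <= M) (db_le : Rabs db <= M)
  (gdc_le : Rabs gdc <= M) (gc_le : Rabs gc <= 1 / 100) (gac_le : Rabs gac <= 1 / 100)
  (eps_ge0 : 0 <= eps) (eps_le : 100 * eps * M ^ 3 <= 1).
Hypotheses (b_eq : b = r ^ 2) (t_eq : t = s * b) (c_eq : c = gc * (b * r))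
  (ac_eq : a * c = gac * b ^ 2) (dc_eq : dc = gdc * b).

Let Rabs_cst (k : R) : 0 <= k -> Rabs k <= k.
Proof. by move=> k_ge0; rewrite Rabs_pos_eq //; lra. Qed.

Let X := a * v1.
Let Y := r * v1.
Let Z := b * v2.

Lemma S_rest_coercive : (X ^ 2 + Y ^ 2 + Z ^ 2) / 4 <= S_rest a b c v1 v2.
Proof.
have -> : S_rest a b c v1 v2 = X ^ 2 + 3 * Y ^ 2 - X * Z - 9 * gc * Y * Z + (1 - 3 * gac) * Z ^ 2.
  by rewrite /S_rest ac_eq c_eq /X /Y /Z b_eq; ring.
have := mul_le_half_sum_sqr 1 1 X Z ltac:(rewrite Rabs_R1; lra).
have := mul_le_half_sum_sqr (9 * gc) (9 / 100) Y Z ltac:(rewrite Rabs_mult Rabs_pos_eq; lra).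
have := mul_le_half_sum_sqr (3 * gac) (3 / 100) Z Z ltac:(rewrite Rabs_mult Rabs_pos_eq; lra).
nra.
Qed.

Let r_abs : Rabs r <= M. Proof. by rewrite Rabs_pos_eq. Qed.

Let M_le_sqr : M <= M ^ 2. Proof. nra. Qed.

Let eps_s_le (k K : R) : Rabs k <= K * M ^ 2 -> Rabs (eps * s * k) <= K / 100.
Proof.
move=> Hk; rewrite Rmult_assoc Rabs_mult (Rabs_pos_eq eps) //.
have K_ge0 : 0 <= K by have := Rabs_pos k; nra.
by have := Rabs_mult_le _ _ _ _ s_le Hk; nra.
Qed.

Lemma S_rest_dt_small :
  eps * t * S_rest_dt a b c da db dc v1 v2 <= (X ^ 2 + Y ^ 2 + Z ^ 2) / 5.
Proof.
have -> : eps * t * S_rest_dt a b c da db dc v1 v2 =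
    0 * X ^ 2 + eps * s * (2 * da * r) * X * Y + eps * s * (- db) * X * Z
    + eps * s * (3 * db) * Y ^ 2 + eps * s * (- (da * r + 9 * gdc * r)) * Y * Z
    + eps * s * (2 * db + -3 * da * gc * r + -3 * a * gdc) * Z ^ 2.
  by rewrite /S_rest_dt dc_eq c_eq t_eq /X /Y /Z b_eq; ring.
have k12 : Rabs (2 * da * r) <= 10 * M ^ 2.
  have c2 := Rabs_cst 2 ltac:(lra).
  by have := Rabs_mult_le _ _ _ _ (Rabs_mult_le _ _ _ _ c2 da_le) r_abs; nra.
have k13 : Rabs (- db) <= 10 * M ^ 2 by rewrite Rabs_Ropp; lra.
have k22 : Rabs (3 * db) <= 10 * M ^ 2.
  have c3 := Rabs_cst 3 ltac:(lra).
  by have := Rabs_mult_le _ _ _ _ c3 db_le; lra.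
have k23 : Rabs (- (da * r + 9 * gdc * r)) <= 10 * M ^ 2.
  have c9 := Rabs_cst 9 ltac:(lra).
  rewrite Rabs_Ropp; have := Rabs_plus_le _ _ _ _ (Rabs_mult_le _ _ _ _ da_le r_abs)
    (Rabs_mult_le _ _ _ _ (Rabs_mult_le _ _ _ _ c9 gdc_le) r_abs).
  nra.
have k33 : Rabs (2 * db + -3 * da * gc * r + -3 * a * gdc) <= 10 * M ^ 2.
  have c2 := Rabs_cst 2 ltac:(lra); have cm3 : Rabs (-3) <= 3 by rewrite Rabs_left; lra.
  have := Rabs_plus_le _ _ _ _ (Rabs_plus_le _ _ _ _ (Rabs_mult_le _ _ _ _ c2 db_le)
    (Rabs_mult_le _ _ _ _ (Rabs_mult_le _ _ _ _ (Rabs_mult_le _ _ _ _ cm3 da_le) gc_le) r_abs))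
    (Rabs_mult_le _ _ _ _ (Rabs_mult_le _ _ _ _ cm3 a_le) gdc_le).
  nra.
have := form3_le 0 _ _ _ _ _ (10 / 100) X Y Z ltac:(rewrite Rabs_R0; lra) (eps_s_le _ _ k12)
  (eps_s_le _ _ k13) (eps_s_le _ _ k22) (eps_s_le _ _ k23) (eps_s_le _ _ k33).
lra.
Qed.

Lemma S_square_dt_small :
  (eps * t * S_square_dt da db v1 v2) ^ 2 <= (X ^ 2 + Y ^ 2 + Z ^ 2) / 5000.
Proof.
have -> : eps * t * S_square_dt da db v1 v2 =
    eps * s * (2 / 3 * da * r) * Y + eps * s * (- (db / 3)) * Z.
  by rewrite /S_square_dt t_eq /Y /Z b_eq /Rdiv; ring.
have k1 : Rabs (2 / 3 * da * r) <= 1 * M ^ 2.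
  have c23 := Rabs_cst (2 / 3) ltac:(lra).
  by have := Rabs_mult_le _ _ _ _ (Rabs_mult_le _ _ _ _ c23 da_le) r_abs; nra.
have k2 : Rabs (- (db / 3)) <= 1 * M ^ 2.
  by rewrite Rabs_Ropp /Rdiv Rabs_mult (Rabs_pos_eq (/ 3)); nra.
have := lin2_sqr_le _ _ _ Y Z (eps_s_le _ _ k1) (eps_s_le _ _ k2).
have := pow2_ge_0 X; lra.
Qed.

Lemma S_perturbed_form_nonneg (w : R) :
  0 <= w ^ 2 + 2 / 9 * S_rest a b c v1 v2
       - eps * t * (2 * w * S_square_dt da db v1 v2 + 2 / 9 * S_rest_dt a b c da db dc v1 v2).
Proof.
have := S_rest_coercive; have := S_rest_dt_small; have := S_square_dt_small.
have := pow2_ge_0 (w - eps * t * S_square_dt da db v1 v2).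
have := pow2_ge_0 X; have := pow2_ge_0 Y; have := pow2_ge_0 Z.
nra.
Qed.

End Perturbation.
Lemma in_S0_dt_bounded (T : R) (n : nat) (f : sym_fun n) :
  in_S0 T f -> exists K, 0 <= K /\ forall t x xi, 0 <= t <= T ->
    Rabs (f t x xi) <= K /\
    exists df, deriv_on T (fun s => f s x xi) t df /\ Rabs df <= K.
Proof.
case=> F [F_nil [F_partial F_bounded]].
have [C0 HC0] := F_bounded [::]; have [C1 HC1] := F_bounded [:: Dt].
exists (Rabs C0 + Rabs C1); split=> [|t x xi Ht].
  by have := Rabs_pos C0; have := Rabs_pos C1; lra.
move: (HC0 t x xi Ht) (HC1 t x xi Ht).
rewrite /= /Rdiv Rinv_1 !Rmult_1_r F_nil // => HF0 HF1.
have [C0_le C1_le] : C0 <= Rabs C0 + Rabs C1 /\ C1 <= Rabs C0 + Rabs C1.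
  by have := Rle_abs C0; have := Rle_abs C1; have := Rabs_pos C0; have := Rabs_pos C1; lra.
split; first lra.
exists (F [:: Dt] t x xi); split; last lra.
apply: (deriv_on_ext T (fun s => F [::] s x xi)) => // [s Hs|]; first exact: F_nil.
exact: (F_partial Dt [::] t x xi Ht).
Qed.

Definition bound_S (delta Ka Kb C : R) : R := 1 + / delta + Ka + Kb + Rabs C.

Definition eps_S (delta Ka Kb C : R) : R := 1 / (100 * bound_S delta Ka Kb C ^ 3).

Lemma bound_S_ge1 (delta Ka Kb C : R) :
  0 < delta -> 0 <= Ka -> 0 <= Kb -> 1 <= bound_S delta Ka Kb C.
Proof.
move=> delta_gt0 Ka_ge0 Kb_ge0; have := Rinv_0_lt_compat _ delta_gt0.
by have := Rabs_pos C; rewrite /bound_S; lra.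
Qed.

Lemma eps_S_gt0 (delta Ka Kb C : R) :
  0 < delta -> 0 <= Ka -> 0 <= Kb -> 0 < eps_S delta Ka Kb C.
Proof.
move=> delta_gt0 Ka_ge0 Kb_ge0; apply: Rdiv_lt_0_compat; first lra.
by have := pow_lt _ 3 (Rlt_le_trans _ _ _ Rlt_0_1 (bound_S_ge1 _ _ _ C delta_gt0 Ka_ge0 Kb_ge0)); lra.
Qed.

Lemma S_perturbed_nonneg_at (a b c da db dc t delta Ka Kb C w v1 v2 : R) :
  0 < delta -> 0 <= t -> delta * t <= b ->
  Rabs a <= Ka -> Rabs da <= Ka -> Rabs b <= Kb -> Rabs db <= Kb -> Rabs dc <= C * b ->
  Rabs (a * c) <= 1 / 100 * b ^ 2 -> Rabs c <= 1 / 100 * (b * sqrt b) ->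
  0 <= w ^ 2 + 2 / 9 * S_rest a b c v1 v2
       - eps_S delta Ka Kb C * t
         * (2 * w * S_square_dt da db v1 v2 + 2 / 9 * S_rest_dt a b c da db dc v1 v2).
Proof.
move=> delta_gt0 t_ge0 b_ge a_le da_le b_le db_le dc_le ac_le c_le.
have Ka_ge0 : 0 <= Ka by have := Rabs_pos a; lra.
have Kb_ge0 : 0 <= Kb by have := Rabs_pos b; lra.
set M := bound_S delta Ka Kb C.
have M_ge1 : 1 <= M := bound_S_ge1 _ _ _ C delta_gt0 Ka_ge0 Kb_ge0.
have b_ge0 : 0 <= b by nra.
have [delta_M [Ka_M [Kb_M [C_M r_le]]]] :
    / delta <= M /\ Ka <= M /\ Kb <= M /\ Rabs C <= M /\ sqrt b <= M.
  have := sqrt_le_1_plus _ b_ge0; have := Rle_abs b; have := Rabs_pos C.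
  by have := Rinv_0_lt_compat _ delta_gt0; rewrite /M /bound_S; lra.
have eps_ge0 : 0 <= eps_S delta Ka Kb C by apply/Rlt_le/eps_S_gt0.
have eps_M : 100 * eps_S delta Ka Kb C * M ^ 3 <= 1.
  by apply: Req_le; rewrite /eps_S -/M; field; have := pow_lt M 3; lra.
have t_le : Rabs t <= / delta * b.
  rewrite Rabs_pos_eq //; apply: (Rmult_le_reg_l delta) => //.
  by rewrite -Rmult_assoc Rinv_r; lra.
have dc_le' : Rabs dc <= Rabs C * b.
  by have := Rmult_le_compat_r _ _ _ b_ge0 (Rle_abs C); lra.
have [s [t_eq s_le]] := exists_ratio _ _ _ b_ge0 (Rlt_le _ _ (Rinv_0_lt_compat _ delta_gt0)) t_le.
have [gc [c_eq gc_le]] :=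
  exists_ratio _ _ (1 / 100) (Rmult_le_pos _ _ b_ge0 (sqrt_pos _)) ltac:(lra) c_le.
have [gac [ac_eq gac_le]] := exists_ratio _ _ (1 / 100) (pow2_ge_0 _) ltac:(lra) ac_le.
have [gdc [dc_eq gdc_le]] := exists_ratio _ _ _ b_ge0 (Rabs_pos C) dc_le'.
apply: (S_perturbed_form_nonneg _ _ _ _ _ _ _ _ s gc gac gdc M _ _ _ M_ge1 (sqrt_pos _) r_le
  (Rle_trans _ _ _ s_le delta_M) (Rle_trans _ _ _ a_le Ka_M) (Rle_trans _ _ _ da_le Ka_M)
  (Rle_trans _ _ _ db_le Kb_M) (Rle_trans _ _ _ gdc_le C_M) gc_le gac_le eps_ge0 eps_M
  (Logic.eq_sym (pow2_sqrt _ b_ge0)) t_eq c_eq ac_eq dc_eq).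
Qed.

Theorem mainTheorem10 :
  exists eps_bar : R, 0 < eps_bar /\
  forall (n : nat) (T delta1 : R) (a b c : sym_fun n),
    0 < T -> 0 < delta1 ->
    in_S0 T a -> in_S0 T b -> in_S0 T c ->
    (forall t x xi, 0 <= t <= T -> delta1 * t <= b t x xi) ->
    (forall t x xi, 0 <= t <= T ->
       Rabs (a t x xi * c t x xi) <= eps_bar * (b t x xi) ^ 2) ->
    (forall t x xi, 0 <= t <= T ->
       Rabs (c t x xi) <= eps_bar * (b t x xi * sqrt (b t x xi))) ->
    (exists C, forall t x xi, 0 <= t <= T ->
       exists dc, deriv_on T (fun s => c s x xi) t dc /\
                  Rabs dc <= C * b t x xi) ->
    exists eps, 0 < eps /\
      forall t x xi, 0 <= t <= T ->
      forall D : nat -> nat -> R,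
        (forall i j, (i < 3)%nat -> (j < 3)%nat ->
           deriv_on T (fun s => Sent i j (a s x xi) (b s x xi) (c s x xi)) t (D i j)) ->
        psd3 (fun i j => Sent i j (a t x xi) (b t x xi) (c t x xi) - eps * t * D i j).
Proof.
exists (1 / 100); split=> [|n T delta a b c T_gt0 delta_gt0 Sa Sb _ b_ge ac_le c_le [C HC]].
  lra.
have [Ka [Ka_ge0 HKa]] := in_S0_dt_bounded _ _ _ Sa.
have [Kb [Kb_ge0 HKb]] := in_S0_dt_bounded _ _ _ Sb.
exists (eps_S delta Ka Kb C); split=> [|t x xi Ht D HD v]; first exact: eps_S_gt0.
have [a_le [da [Hda da_le]]] := HKa t x xi Ht.
have [b_le [db [Hdb db_le]]] := HKb t x xi Ht.
have [dc [Hdc dc_le]] := HC t x xi Ht.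
change (0 <= quad_form3 (fun i j => Sent i j (a t x xi) (b t x xi) (c t x xi)
  - eps_S delta Ka Kb C * t * D i j) v).
rewrite quad_form3_sub quad_form3_S (quad_form3_S_dt T _ _ _ _ _ _ _ _ _ T_gt0 Ht Hda Hdb Hdc HD).
exact: (S_perturbed_nonneg_at _ _ _ _ _ _ _ _ _ _ _ _ _ _ delta_gt0 (proj1 Ht) (b_ge _ _ _ Ht)
  a_le da_le b_le db_le dc_le (ac_le _ _ _ Ht) (c_le _ _ _ Ht)).
Qed.
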